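(* Consider a human–algorithm system (as defined in the context) that exhibits fairness of benefit, i.e. $c(a_i,h_i)<h_i$ for every $i\in\{1,\dots,N\}$. Then the system does not exhibit complementarity.
   Context: A human–algorithm system consists of: an integer $N\ge1$ (number of regimes); probabilities $p_1,\dots,p_N\ge 0$ with $\sum_i p_i=1$; algorithmic losses $a_1,\dots,a_N\ge 0$ and unaided-human losses $h_1,\dots,h_N\ge0$; and a combining function $c:[0,\infty)^2\to\mathbb{R}$ satisfying $\min(a,h)\le c(a,h)\le\max(a,h)$ for all $a,h\ge0$, where $c(a_i,h_i)$ is the loss of the combined system in regime $i$. Write $A=\sum_i p_i a_i$ and $H=\sum_i p_i h_i$. The system exhibits complementarity if $\sum_{i=1}^N p_i\,c(a_i,h_i)<\min(A,H)$. *)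

From mathcomp Require Import all_boot all_order all_algebra.
From mathcomp Require Import reals.
Set Implicit Arguments. Unset Strict Implicit. Unset Printing Implicit Defensive.
Import Order.TTheory GRing.Theory Num.Theory.
Local Open Scope ring_scope.

(* A human-algorithm system with N regimes indexed by 'I_N:
   p i = probability of regime i, a i = algorithmic loss, h i = human loss,
   c = combining function (only its values on [0,oo)^2 matter). *)

Definition exp_loss (R : realType) (N : nat) (p f : 'I_N -> R) : R :=
  \sum_(i < N) p i * f i.

Definition complementarity (R : realType) (N : nat) (p a h : 'I_N -> R)
  (c : R -> R -> R) : Prop :=
  \sum_(i < N) p i * c (a i) (h i) < Num.min (exp_loss p a) (exp_loss p h).

Definition fairness_of_benefit (R : realType) (N : nat) (a h : 'I_N -> R)
  (c : R -> R -> R) : Prop :=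
  forall i : 'I_N, c (a i) (h i) < h i.

From mathcomp Require Import all_boot all_order all_algebra.
From mathcomp Require Import reals.
Set Implicit Arguments. Unset Strict Implicit. Unset Printing Implicit Defensive.
Import Order.TTheory GRing.Theory Num.Theory.
Local Open Scope ring_scope.

(* Since c(a_i,h_i) >= min(a_i,h_i) and c(a_i,h_i) < h_i, the minimum must be
   a_i, so the combined loss dominates the algorithmic loss in every regime.
   Averaging over regimes, the combined expected loss is at least A, hence not
   below min(A, H). *)

Lemma ge_min_lt_r (d : Order.disp_t) (T : orderType d) (x y z : T) :
  (Order.min x y <= z -> z < y -> x <= z)%O.
Proof.
case: (leP x y) => [xy|yx] zmin zy //.
by have := lt_le_trans zy zmin; rewrite ltxx.
Qed.

Lemma ler_exp_loss (R : realType) (N : nat) (p f g : 'I_N -> R) :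
  (forall i, 0 <= p i) -> (forall i, f i <= g i) ->
  exp_loss p f <= exp_loss p g.
Proof. by move=> p0 fg; apply: ler_sum => i _; apply: ler_wpM2l. Qed.

Lemma fairness_of_benefit_ge_alg (R : realType) (N : nat) (a h : 'I_N -> R)
    (c : R -> R -> R) :
  (forall i, Num.min (a i) (h i) <= c (a i) (h i)) ->
  fairness_of_benefit a h c -> forall i, a i <= c (a i) (h i).
Proof. by move=> cmin fair i; apply: ge_min_lt_r (cmin i) (fair i). Qed.

Lemma not_complementarity_ge_alg (R : realType) (N : nat) (p a h : 'I_N -> R)
    (c : R -> R -> R) :
  (forall i, 0 <= p i) -> (forall i, a i <= c (a i) (h i)) ->
  ~ complementarity p a h c.
Proof.
move=> p0 ac; rewrite /complementarity lt_min => /andP[+ _].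
by rewrite ltNge (ler_exp_loss p0 ac).
Qed.

Theorem lemma8 (R : realType) (N : nat) (p a h : 'I_N -> R) (c : R -> R -> R)
  (hN : (1 <= N)%N)
  (hp0 : forall i, 0 <= p i)
  (hp1 : \sum_(i < N) p i = 1)
  (ha0 : forall i, 0 <= a i)
  (hh0 : forall i, 0 <= h i)
  (hc : forall x y : R, 0 <= x -> 0 <= y ->
          Num.min x y <= c x y /\ c x y <= Num.max x y)
  (hfair : fairness_of_benefit a h c) :
  ~ complementarity p a h c.
Proof.
apply: not_complementarity_ge_alg hp0 _.
apply: fairness_of_benefit_ge_alg hfair => i.
by case: (hc _ _ (ha0 i) (hh0 i)).
Qed.
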